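(* Let $n_0\ge 1$ be an integer and let $a_{-n_0},\dots,a_{n_0}$ be complex numbers with $a_j=\overline{a_{-j}}$ for all $j$. Let $\phi(e^{i\theta})=\sum_{n=-n_0}^{n_0}a_ne^{in\theta}$ and, for $N\ge 1$, let $T_N=T_N(\phi)$ be the $(N+1)\times(N+1)$ band Toeplitz matrix with entries $(T_N)_{k+1,l+1}=a_{k-l}$ if $|k-l|\le n_0$ and $0$ otherwise ($0\le k,l\le N$). Let $K(z)=\sum_{m=-n_0}^{n_0}a_m z^{m+n_0}$, and assume that $K$ has no root of modulus $1$, that $K$ has exactly $n_0$ roots (counted with multiplicity) of modulus $<1$ and $n_0$ roots of modulus $>1$, and that $K$ is normalized so that its leading coefficient is $1$, i.e. $K(z)=\prod_{i=1}^{\sigma}(z-\alpha_i)^{s_i}\prod_{j=1}^{\sigma}(z-\overline{\alpha_j}^{-1})^{s_j}$ where $\alpha_1,\dots,\alpha_\sigma$ are the distinct roots of $K$ of modulus $<1$, with multiplicities $s_i$, $\sum_i s_i=n_0$. Then: (i) $T_N$ is invertible; (ii) let $x\in]0,1[$ and let $k=k_N$, $l=l_N\in\{0,\dots,N\}$ satisfy $|k-l|=Nx$. Then for every real $a\in]0,1[$ and every real $\rho$ with $\max\{|\alpha_i|:1\le i\le\sigma\}<\rho<1$, one has $(T_N^{-1})_{k+1,l+1}=o(\rho^{a|k-l|})$ as $N\to\infty$. *)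

From HB Require Import structures.
From mathcomp Require Import all_boot all_order all_algebra.
From mathcomp Require Import reals exp.
From mathcomp Require Import complex.
Set Implicit Arguments. Unset Strict Implicit. Unset Printing Implicit Defensive.
Import Order.TTheory GRing.Theory Num.Theory.
Local Open Scope ring_scope.

Definition toeplitz_band (C : nzRingType) (n0 N : nat) (a : int -> C)
  : 'M[C]_(N.+1) :=
  \matrix_(k < N.+1, l < N.+1)
     if (`|(k%:Z - l%:Z)%R|%N <= n0)%N then a (k%:Z - l%:Z) else 0.

Definition Kpoly (C : nzRingType) (n0 : nat) (a : int -> C) : {poly C} :=
  \sum_(i < (n0.*2).+1) a (i%:Z - n0%:Z) *: 'X^i.

(* Put h = prod_i (X - alpha_i) and c = prod_i (- 1 / conj alpha_i).  The normalisation of K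
   and the symmetry a_j = conj a_(-j) give K = c h h~, with h~ the conjugate reciprocal of h;
   comparing coefficients, T_N = c adj(H) H where H is the (n0 + N + 1) x (N + 1) matrix of
   multiplication by h.  Its lower square block U is the upper triangular Toeplitz matrix of
   prod_i (1 - alpha_i X), whose inverse V is the Toeplitz matrix of the truncated geometric
   series prod_i (sum_j alpha_i^j X^j); so |V_(t,k)| <= M rho^(k - t) whenever
   max |alpha_i| < rho.  Writing H = (E; U) and F = E V, the Woodbury identity gives
   T_N^-1 = c^-1 V (1 - adj(F) W F) adj(V) with W the inverse of the n0 x n0 positive definite
   matrix 1 + F adj(F), whose entries have modulus at most 1, while F decays geometrically
   along its rows.  Hence |T_N^-1_(k,l)| <= C rho^|k - l| with C independent of N, and
   C rho^d = o(rho^(b d)) for b < 1 as d = |k - l| = N x tends to infinity. *)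

From HB Require Import structures.
From mathcomp Require Import all_boot all_order all_algebra.
From mathcomp Require Import reals exp complex.
From mathcomp Require Import zify ring lra.
Set Implicit Arguments. Unset Strict Implicit. Unset Printing Implicit Defensive.
Import Order.TTheory GRing.Theory Num.Theory.
Local Open Scope ring_scope.
Local Open Scope complex_scope.
Import Normc.

Lemma big_ord_window (V : nmodType) (F : nat -> V) n s w :
  (s + w < n)%N -> (forall t, (t < s)%N || (s + w < t)%N -> F t = 0) ->
  \sum_(t < n) F t = \sum_(i < w.+1) F (s + i)%N.
Proof.
move=> lt_n F0; rewrite -(big_mkord xpredT F) (@big_cat_nat _ _ _ s) //=; last lia.
rewrite big_nat_cond big1 ?add0r; last by move=> t /andP[/andP[_ lt_ts] _]; rewrite F0 ?lt_ts.
rewrite (@big_cat_nat _ _ _ (s + w.+1)) /=; [|lia|lia].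
rewrite [X in _ + X]big_nat_cond [X in _ + X]big1 ?addr0; last first.
  by move=> t /andP[/andP[le_t _] _]; rewrite F0 //; lia.
by rewrite -{1}(add0n s) big_addn addKn big_mkord; apply: eq_bigr => i _; rewrite addnC.
Qed.

Lemma big_ord_shift (V : nmodType) (F : nat -> V) n m :
  \sum_(j < n) (if (m <= j)%N then F (j - m)%N else 0) = \sum_(i < n - m) F i.
Proof.
elim: n => [|n IHn]; first by rewrite !big_ord0.
rewrite big_ord_recr /= IHn; case: (leqP m n) => [le_mn | lt_nm].
  by rewrite subSn // big_ord_recr.
by rewrite addr0 (_ : (n.+1 - m = n - m)%N) //; lia.
Qed.

Lemma sum_ord_ltn_le (R : realDomainType) (c : R) n m : 0 <= c ->
  \sum_(s < n) (if (s < m)%N then c else 0) <= m%:R * c.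
Proof.
move=> c_ge0; suff <- : (minn n m)%:R * c = \sum_(s < n) (if (s < m)%N then c else 0).
  by rewrite ler_wpM2r // ler_nat geq_minr.
elim: n => [|n IHn]; first by rewrite big_ord0 min0n mul0r.
rewrite big_ord_recr -IHn /=; case: (ltnP n m) => [lt_nm | le_mn].
  have -> : minn n.+1 m = n.+1 by lia.
  by rewrite -natr1 mulrDl mul1r.
have -> : minn n.+1 m = m by lia.
by rewrite addr0.
Qed.

Section GeometricSums.
Variable R : realFieldType.

Lemma sum_expr_le (t : R) n : 0 <= t < 1 -> \sum_(j < n) t ^+ j <= (1 - t)^-1.
Proof.
move=> /andP[t_ge0 t_lt1]; have t1_gt0 : 0 < 1 - t by rewrite subr_gt0.
rewrite -(ler_pM2l t1_gt0) mulfV ?gt_eqF // -opprB mulNr -subrX1 opprB.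
by rewrite gerBl exprn_ge0.
Qed.

Lemma sum_shift_expr_le (t : R) m n : 0 <= t < 1 ->
  \sum_(j < n) (if (m <= j)%N then t ^+ (j - m) else 0) <= (1 - t)^-1.
Proof. by move=> t01; rewrite (big_ord_shift (fun i => t ^+ i)) sum_expr_le. Qed.

End GeometricSums.

Lemma bernoulli_ineq (R : realDomainType) (d : R) n : 0 <= d -> 1 + n%:R * d <= (1 + d) ^+ n.
Proof.
move=> d_ge0; elim: n => [|n IHn]; first by rewrite mul0r addr0 expr0.
rewrite exprS -natr1 mulrDl mul1r.
have := exprn_ge0 n (addr_ge0 ler01 d_ge0); have := mulr_ge0 (ler0n R n) d_ge0; nra.
Qed.

Lemma exprn_dominated (R : archiRealFieldType) (rho tau C eps x : R) :
  0 < rho < tau -> 0 < eps -> 0 < x ->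
  exists N1 : nat, forall N d : nat, (N1 <= N)%N -> d%:R = N%:R * x ->
    C * rho ^+ d <= eps * tau ^+ d.
Proof.
move=> /andP[rho_gt0 rho_lt_tau] eps_gt0 x_gt0.
set del := tau / rho - 1.
have del_gt0 : 0 < del by rewrite subr_gt0 ltr_pdivlMr // mul1r.
have edx_gt0 : 0 < eps * del * x by rewrite !mulr_gt0.
exists (Num.truncn (C / (eps * del * x))).+1 => N d le_N1N dE.
have C_le : C <= eps * del * d%:R.
  rewrite dE mulrCA -ler_pdivrMr // ltW // (lt_le_trans (truncnS_gt _)) //.
  by rewrite ler_nat.
have tauE : tau = rho * (1 + del) by rewrite /del addrC subrK mulrCA divff ?mulr1 ?gt_eqF.
rewrite tauE exprMn mulrCA [C * _]mulrC; apply: ler_wpM2l; first by rewrite exprn_ge0 ?ltW.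
apply: le_trans (ler_wpM2l (ltW eps_gt0) (bernoulli_ineq d (ltW del_gt0))).
nra.
Qed.

Lemma ltr1_powR (R : realType) (r b : R) : 0 < r < 1 -> b < 1 -> r < r `^ b.
Proof.
move=> r01 b_lt1; have ln_r_lt0 := ln_lt0 r01; have /andP[r_gt0 _] := r01.
rewrite /powR (gt_eqF r_gt0) -{1}(lnK r_gt0) ltr_expR; nra.
Qed.

Section UpperToeplitz.
Variable C : nzRingType.
Implicit Types (p q : {poly C}) (z : C).

(* X^n p(1/X) when size p <= n.+1. *)
Definition reciprocal n p : {poly C} := \poly_(j < n.+1) p`_(n - j).

Definition upper_toeplitz N p : 'M[C]_N.+1 :=
  \matrix_(s, k) if (s <= k)%N then p`_(k - s) else 0.

Definition geom_poly z N : {poly C} := \poly_(j < N.+1) z ^+ j.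

Lemma upper_toeplitzM N p q :
  upper_toeplitz N (p * q) = upper_toeplitz N p *m upper_toeplitz N q.
Proof.
apply/matrixP => s k; rewrite !mxE; under eq_bigr do rewrite !mxE.
case: (leqP s k) => [le_sk | lt_ks]; last first.
  by rewrite big1 // => t _; case: (leqP s t); case: (leqP t k); rewrite ?mulr0 ?mul0r //; lia.
rewrite coefM (@big_ord_window _ (fun t => (if (s <= t)%N then p`_(t - s) else 0) *
                                  (if (t <= k)%N then q`_(k - t) else 0)) _ s (k - s)).
- apply: eq_bigr => i _ /=; rewrite leq_addr addKn.
  have le_sik : (s + i <= k)%N by have := ltn_ord i; lia.
  by rewrite le_sik subnDA.
- by have := ltn_ord k; lia.
- move=> t /orP[lt_ts | lt_kt]; first by rewrite leqNgt lt_ts mul0r.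
  by rewrite (leqNgt t k) (_ : (k < t)%N) ?mulr0 //; lia.
Qed.

Lemma upper_toeplitz1 N : upper_toeplitz N 1 = 1%:M.
Proof.
apply/matrixP => s k; rewrite !mxE coef1 subn_eq0.
by rewrite -(inj_eq val_inj) eqn_leq; case: leqP.
Qed.

Lemma upper_toeplitz_geom N z :
  upper_toeplitz N ((1 - z *: 'X) * geom_poly z N) = 1%:M.
Proof.
rewrite -upper_toeplitz1; apply/matrixP => s k; rewrite !mxE.
case: leqP => // le_sk.
rewrite mulrBl mul1r -scalerAl coefB coefZ coefXM !coef_poly coef1.
have lt_kN : (k - s < N.+1)%N by have := ltn_ord k; lia.
rewrite lt_kN; case: (k - s)%N lt_kN => [|i lt_iN] /=; first by rewrite mulr0 subr0.
by rewrite ltnW // -exprS subrr.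
Qed.

(* The matrix of q |-> p * q on coefficient vectors, for size q <= N.+1. *)
Definition conv_mx n N p : 'M[C]_(n + N.+1, N.+1) :=
  \matrix_(r, k) if (k <= r)%N then p`_(r - k) else 0.

Lemma dsubmx_conv_mx n N p : (size p <= n.+1)%N ->
  dsubmx (conv_mx n N p) = upper_toeplitz N (reciprocal n p).
Proof.
move=> size_p; apply/matrixP => s k; rewrite !mxE /= coef_poly.
case: (leqP s k) => le_sk; last by rewrite [LHS]ifT ?nth_default ?(leq_trans size_p) //; lia.
case: (ltnP (k - s) n.+1) => lt_ksn; last by rewrite [LHS]ifF //; lia.
by rewrite [LHS]ifT; [congr (p`_ _) | ]; lia.
Qed.

Lemma reciprocal_XsubC_mul n p z : (size p <= n.+1)%N ->
  reciprocal n.+1 (('X - z%:P) * p) = (1 - z *: 'X) * reciprocal n p.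
Proof.
move=> size_p; apply/polyP => j.
rewrite coef_poly [in RHS]mulrBl mul1r -scalerAl coefB coefZ coefXM !coef_poly.
rewrite mulrBl coefB coefXM coefCM.
have p_hi i : (n < i)%N -> p`_i = 0 by move=> lt_ni; rewrite nth_default // (leq_trans size_p).
case: j => [|j] /=; first by rewrite !subn0 (p_hi n.+1) ?mulr0.
rewrite subSS; case: (ltngtP j n) => [lt_jn | lt_nj | ->]; last first.
- by rewrite subnn !ltnSn ltnn.
- by rewrite !ifF ?mulr0 ?subr0 //; lia.
have [lt_jn1 lt_jn2 lt_jn3] : [/\ (j.+1 < n.+2)%N, (j.+1 < n.+1)%N & (j < n.+1)%N].
  by split; lia.
have [nz_nj pred_nj] : (n - j != 0)%N /\ ((n - j).-1 = n - j.+1)%N by lia.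
by rewrite lt_jn1 lt_jn2 lt_jn3 (negbTE nz_nj) pred_nj.
Qed.

End UpperToeplitz.

Lemma upper_toeplitz_prod_geom (C : comNzRingType) N (L : seq C) :
  upper_toeplitz N (\prod_(z <- L) (1 - z *: 'X)) *m
  upper_toeplitz N (\prod_(z <- L) geom_poly z N) = 1%:M.
Proof.
rewrite -upper_toeplitzM -big_split /=; elim: L => [|z L IHL].
  by rewrite big_nil upper_toeplitz1.
by rewrite big_cons upper_toeplitzM upper_toeplitz_geom mul1mx IHL.
Qed.

Lemma reciprocal_prod_XsubC (C : nzRingType) (L : seq C) :
  reciprocal (size L) (\prod_(z <- L) ('X - z%:P)) = \prod_(z <- L) (1 - z *: 'X).
Proof.
elim: L => [|z L IHL].
  by rewrite !big_nil; apply/polyP => -[|j]; rewrite coef_poly coef1 /= ?subn0 ?coef1.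
by rewrite !big_cons /= reciprocal_XsubC_mul ?IHL // size_prod_XsubC.
Qed.

Section ComplexNorm.
Variable R : rcfType.
Implicit Types (z : R[i]) (x : R).

Lemma normr_normc z : `|z| = (normc z)%:C.
Proof. by case: z => a b; rewrite normc_def. Qed.

Lemma normc_ge0 z : 0 <= normc z.
Proof. exact: (@normr_ge0 _ (Rcomplex R)). Qed.

Lemma normc_sum (I : Type) (s : seq I) (F : I -> R[i]) :
  normc (\sum_(i <- s) F i) <= \sum_(i <- s) normc (F i).
Proof. exact: (@ler_norm_sum _ (Rcomplex R)). Qed.

Lemma normcB z w : normc (z - w) <= normc z + normc w.
Proof. by rewrite -(normcN w); apply: le_normcD. Qed.

Lemma normc_conj z : normc z^* = normc z.
Proof. by apply: complexI; rewrite -!normr_normc normcJ. Qed.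

Lemma normcX z n : normc (z ^+ n) = normc z ^+ n.
Proof. by apply: complexI; rewrite rmorphXn -!normr_normc normrX. Qed.

Lemma normc_real x : normc x%:C = `|x|.
Proof. by apply: complexI; rewrite -normr_normc normc_def /= expr0n addr0 sqrtr_sqr. Qed.

Lemma mulcJ z : z * z^* = (normc z ^+ 2)%:C.
Proof. by rewrite -sqr_normc normr_normc rmorphXn. Qed.

End ComplexNorm.

Lemma normc_coef_prod_geom (R : rcfType) (L : seq R[i]) (r : R) :
  0 < r -> (forall z, z \in L -> normc z < r) ->
  exists2 M, 0 <= M & forall N n, normc (\prod_(z <- L) geom_poly z N)`_n <= M * r ^+ n.
Proof.
move=> r_gt0; elim: L => [|z L IHL] Lr.
  exists 1 => // N n; rewrite big_nil coef1 mul1r.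
  case: n => [|n]; first by rewrite expr0 normc1.
  by rewrite (_ : (n.+1 == 0)%N = false) // normc0 exprn_ge0 ?ltW.
have [M M_ge0 PM] : exists2 M, 0 <= M & forall N n,
    normc (\prod_(w <- L) geom_poly w N)`_n <= M * r ^+ n.
  by apply: IHL => w wL; rewrite Lr // inE wL orbT.
set t := normc z / r.
have t_ge0 : 0 <= t by rewrite divr_ge0 ?normc_ge0 ?ltW.
have t_lt1 : t < 1 by rewrite ltr_pdivrMr // mul1r Lr // mem_head.
exists (M / (1 - t)) => [|N n]; first by rewrite divr_ge0 // subr_ge0 ltW.
rewrite big_cons coefM; apply: le_trans (normc_sum _ _) _.
apply: (@le_trans _ _ (\sum_(j < n.+1) M * r ^+ n * t ^+ j)).
  apply: ler_sum => j _; rewrite normcM.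
  have le_jn : (j <= n)%N by rewrite -ltnS.
  have -> : M * r ^+ n * t ^+ j = normc z ^+ j * (M * r ^+ (n - j)).
    rewrite /t exprMn exprVn -{1}(subnK le_jn) exprD.
    by field; rewrite expf_neq0 // gt_eqF.
  apply: ler_pM; rewrite ?normc_ge0 // coef_poly.
  by case: ifP; rewrite ?normcX // normc0 exprn_ge0 ?normc_ge0.
rewrite -mulr_sumr [X in _ <= X]mulrAC; apply: ler_wpM2l.
  by rewrite mulr_ge0 // exprn_ge0 // ltW.
by apply: sum_expr_le; rewrite t_ge0.
Qed.

Section Adjoint.
Variable R : rcfType.

Definition adjmx m n (A : 'M[R[i]]_(m, n)) : 'M[R[i]]_(n, m) := (map_mx conjc A)^T.

Lemma adjmxE m n (A : 'M[R[i]]_(m, n)) i j : adjmx A i j = (A j i)^*.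
Proof. by rewrite !mxE. Qed.

Lemma adjmxM m n p (A : 'M[R[i]]_(m, n)) (B : 'M[R[i]]_(n, p)) :
  adjmx (A *m B) = adjmx B *m adjmx A.
Proof. by rewrite /adjmx map_mxM trmx_mul. Qed.

Lemma adjmxK m n (A : 'M[R[i]]_(m, n)) : adjmx (adjmx A) = A.
Proof. by apply/matrixP => i j; rewrite !adjmxE conjcK. Qed.

Lemma adjmx1 n : adjmx (1%:M : 'M[R[i]]_n) = 1%:M.
Proof. by rewrite /adjmx map_mx1 trmx1. Qed.

Lemma adjmx_col_mx m1 m2 n (A : 'M[R[i]]_(m1, n)) (B : 'M[R[i]]_(m2, n)) :
  adjmx (col_mx A B) = row_mx (adjmx A) (adjmx B).
Proof. by rewrite /adjmx map_col_mx tr_col_mx. Qed.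

Lemma normc_mulmx_le m n p (A : 'M[R[i]]_(m, n)) (B : 'M[R[i]]_(n, p)) i k (f g : 'I_n -> R) :
  (forall j, normc (A i j) <= f j) -> (forall j, normc (B j k) <= g j) ->
  normc ((A *m B) i k) <= \sum_j f j * g j.
Proof.
move=> Af Bg; rewrite mxE (le_trans (normc_sum _ _)) // ler_sum // => j _.
by rewrite normcM ler_pM ?normc_ge0.
Qed.

Lemma mulmx_adjmx_row n (y : 'rV[R[i]]_n) : (y *m adjmx y) 0 0 = (\sum_j normc (y 0 j) ^+ 2)%:C.
Proof. by rewrite mxE rmorph_sum; apply: eq_bigr => j _; rewrite adjmxE mulcJ. Qed.

Lemma quad_gram_1D m n (F : 'M[R[i]]_(m, n)) (y : 'rV[R[i]]_m) :
  (y *m (1%:M + F *m adjmx F) *m adjmx y) 0 0 =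
  (\sum_j normc (y 0 j) ^+ 2 + \sum_j normc ((y *m F) 0 j) ^+ 2)%:C.
Proof.
rewrite mulmxDr mulmx1 mulmxDl mxE mulmx_adjmx_row rmorphD; congr (_ + _).
by rewrite mulmxA -mulmxA -adjmxM mulmx_adjmx_row.
Qed.

Lemma unitmx_gram_1D m n (F : 'M[R[i]]_(m, n)) : 1%:M + F *m adjmx F \in unitmx.
Proof.
rewrite -row_free_unit; apply: inj_row_free => y yG0.
have := quad_gram_1D F y; rewrite yG0 mul0mx mxE => /(congr1 (@complex.Re R)) /=.
move/esym/eqP; rewrite paddr_eq0 ?sumr_ge0 // => [/andP[y0 _] | j _ | j _]; try exact: sqr_ge0.
apply/rowP => j; rewrite mxE; apply: eq0_normc; apply/eqP; rewrite -sqrf_eq0.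
by move: y0; rewrite psumr_eq0 => [/allP/(_ j (mem_index_enum _))/implyP->| ? _]; rewrite ?sqr_ge0.
Qed.

Lemma normc_invmx_gram_1D_le1 m n (F : 'M[R[i]]_(m, n)) p q :
  normc (invmx (1%:M + F *m adjmx F) p q) <= 1.
Proof.
(* W_pp = |row p W|^2 + |row p W *m F|^2, which bounds both |W_pp|^2 and |W_pq|^2. *)
set W := invmx _; pose y := row p W.
have := quad_gram_1D F y; rewrite -row_mul mulVmx ?unitmx_gram_1D // -row_mul mul1mx.
rewrite !mxE; set S1 := \sum_j _; set S2 := \sum_j _ => WppJ.
have S1_ge j : normc (W p j) ^+ 2 <= S1.
  by rewrite /S1 (bigD1 j) //= mxE lerDl sumr_ge0 // => i _; apply: sqr_ge0.
have S2_ge0 : 0 <= S2 by rewrite sumr_ge0 // => i _; apply: sqr_ge0.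
have Wpp_eq : normc (W p p) = S1 + S2.
  by rewrite -normc_conj WppJ normc_real ger0_norm // addr_ge0 // (le_trans (sqr_ge0 _) (S1_ge p)).
have := S1_ge p; have := normc_ge0 (W p p) => ? ?.
have Wpp_le1 : normc (W p p) <= 1 by nra.
have := S1_ge q; have := normc_ge0 (W p q); nra.
Qed.

Lemma woodbury_adjmx m n (F : 'M[R[i]]_(m, n)) :
  (1%:M + adjmx F *m F) *m (1%:M - adjmx F *m invmx (1%:M + F *m adjmx F) *m F) = 1%:M.
Proof.
have FG : (1%:M + adjmx F *m F) *m adjmx F = adjmx F *m (1%:M + F *m adjmx F).
  by rewrite mulmxDl mulmxDr mul1mx mulmx1 mulmxA.
rewrite mulmxBr mulmx1 !mulmxA FG -(mulmxA (adjmx F)) mulmxV ?unitmx_gram_1D //.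
by rewrite mulmx1 addrK.
Qed.

(* The inverse of adj(H) H for H = col_mx E U and V = U^-1: with F = E V one has
   adj(H) H = adj(U) (1 + adj(F) F) U, inverted by the Woodbury identity. *)
Definition gram_inv m n (E : 'M[R[i]]_(m, n)) (V : 'M[R[i]]_n) : 'M[R[i]]_n :=
  let X := V *m adjmx (E *m V) in
  V *m adjmx V - X *m invmx (1%:M + (E *m V) *m adjmx (E *m V)) *m adjmx X.

Lemma gram_invP m n (E : 'M[R[i]]_(m, n)) (U V : 'M[R[i]]_n) :
  U *m V = 1%:M -> V *m U = 1%:M ->
  adjmx (col_mx E U) *m col_mx E U *m gram_inv E V = 1%:M.
Proof.
move=> UV VU; rewrite /gram_inv; set F := E *m V.
have E_FU : E = F *m U by rewrite /F -mulmxA VU mulmx1.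
have -> : adjmx (col_mx E U) *m col_mx E U = adjmx U *m (1%:M + adjmx F *m F) *m U.
  by rewrite adjmx_col_mx mul_row_col {1 2}E_FU adjmxM mulmxDr mulmxDl mulmx1 !mulmxA addrC.
clearbody F; set W := invmx _.
have -> : V *m adjmx V - V *m adjmx F *m W *m adjmx (V *m adjmx F) =
          V *m (1%:M - adjmx F *m W *m F) *m adjmx V.
  by rewrite adjmxM adjmxK mulmxBr mulmxBl mulmx1 !mulmxA.
rewrite !mulmxA -(mulmxA _ U V) UV mulmx1 -(mulmxA _ (1%:M + _)) woodbury_adjmx.
by rewrite mulmx1 -adjmxM VU adjmx1.
Qed.

End Adjoint.

Section Decay.
Variables (R : rcfType) (rho : R).
Hypotheses (rho_gt0 : 0 < rho) (rho_lt1 : rho < 1).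

Lemma normc_mulmx_adjmx_decay n (V : 'M[R[i]]_n) (M : R) :
  (forall t k, normc (V t k) <= if (t <= k)%N then M * rho ^+ (k - t) else 0) ->
  forall k l, normc ((V *m adjmx V) k l) <=
              M ^+ 2 / (1 - rho) * rho ^+ `|(k%:Z - l%:Z)%R|%N.
Proof.
move=> Vdecay k l; set d := `|_|%N.
have VJ t : normc (adjmx V t l) <= if (l <= t)%N then M * rho ^+ (t - l) else 0.
  by rewrite adjmxE normc_conj.
apply: le_trans (normc_mulmx_le (Vdecay k) VJ) _.
apply: (@le_trans _ _ (\sum_(t < n) M ^+ 2 * rho ^+ d *
          (if (maxn k l <= t)%N then rho ^+ (t - maxn k l) else 0))).
  apply: ler_sum => t _; rewrite geq_max.
  case: (leqP k t) => kt; case: (leqP l t) => lt /=; rewrite ?mulr0 ?mul0r //.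
  rewrite mulrACA -expr2 -!exprD -mulrA -exprD ler_wpM2l ?sqr_ge0 // ler_iXn2l //.
  rewrite /d; lia.
rewrite -mulr_sumr [X in _ <= X]mulrAC; apply: ler_wpM2l.
  by rewrite mulr_ge0 ?sqr_ge0 ?exprn_ge0 ?ltW.
by apply: sum_shift_expr_le; rewrite ltW ?rho_lt1.
Qed.

Lemma normc_mulmx_adjmx_row_decay n m (G : 'M[R[i]]_n) (E : 'M[R[i]]_(m, n)) (A Hm : R) :
  0 <= A -> 0 <= Hm ->
  (forall k s, normc (G k s) <= A * rho ^+ `|(k%:Z - s%:Z)%R|%N) ->
  (forall p s, normc (E p s) <= if (s < m)%N then Hm else 0) ->
  forall k p, normc ((G *m adjmx E) k p) <= m%:R * A * Hm / rho ^+ m * rho ^+ k.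
Proof.
move=> A_ge0 Hm_ge0 Gdecay Ebound k p.
have Ebound' s : normc (adjmx E s p) <= if (s < m)%N then Hm else 0.
  by rewrite adjmxE normc_conj.
apply: le_trans (normc_mulmx_le (Gdecay k) Ebound') _.
have rhom_gt0 : 0 < rho ^+ m by rewrite exprn_gt0.
set c := A * Hm / rho ^+ m * rho ^+ k.
have c_ge0 : 0 <= c by rewrite /c !mulr_ge0 // ?invr_ge0 exprn_ge0 // ltW.
apply: (@le_trans _ _ (\sum_(s < n) (if (s < m)%N then c else 0))).
  apply: ler_sum => s _; case: ltnP => [lt_sm|]; rewrite ?mulr0 //.
  have le_pow : rho ^+ `|(k%:Z - s%:Z)%R|%N <= rho ^+ k / rho ^+ m.
    by rewrite ler_pdivlMr // -exprD ler_iXn2l //; lia.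
  rewrite /c mulrAC -!mulrA; apply: ler_wpM2l => //; apply: ler_wpM2l => //.
  by rewrite mulrC.
by apply: le_trans (sum_ord_ltn_le _ _ c_ge0) _; rewrite /c !mulrA.
Qed.

Lemma normc_sandwich_decay n m (X : 'M[R[i]]_(n, m)) (W : 'M[R[i]]_m) (D : R) :
  (forall k p, normc (X k p) <= D * rho ^+ k) -> (forall p q, normc (W p q) <= 1) ->
  forall k l, normc ((X *m W *m adjmx X) k l) <= (m%:R * D) ^+ 2 * rho ^+ (k + l).
Proof.
move=> Xdecay W_le1 k l.
have XW_le q : normc ((X *m W) k q) <= m%:R * D * rho ^+ k.
  apply: le_trans (normc_mulmx_le (Xdecay k) (W_le1^~ q)) _.
  by rewrite /= sumr_const card_ord mulr1 mulr_natl mulrnAl.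
have XJ_le q : normc (adjmx X q l) <= D * rho ^+ l by rewrite adjmxE normc_conj.
apply: le_trans (normc_mulmx_le XW_le XJ_le) _.
rewrite /= sumr_const card_ord exprD.
have -> : m%:R * D * rho ^+ k * (D * rho ^+ l) *+ m =
          (m%:R * D) ^+ 2 * (rho ^+ k * rho ^+ l) by ring.
by [].
Qed.

Lemma gram_inv_decay m (Mv Hm : R) : 0 <= Hm ->
  exists C : R, forall n (E : 'M[R[i]]_(m, n)) (V : 'M[R[i]]_n),
    (forall t k, normc (V t k) <= if (t <= k)%N then Mv * rho ^+ (k - t) else 0) ->
    (forall p s, normc (E p s) <= if (s < m)%N then Hm else 0) ->
    forall k l, normc (gram_inv E V k l) <= C * rho ^+ `|(k%:Z - l%:Z)%R|%N.
Proof.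
move=> Hm_ge0; set A := Mv ^+ 2 / (1 - rho); set D := m%:R * A * Hm / rho ^+ m.
have A_ge0 : 0 <= A by rewrite /A divr_ge0 ?sqr_ge0 // subr_ge0 ltW.
exists (A + (m%:R * D) ^+ 2) => n E V Vdecay Ebound k l.
have VV_decay := normc_mulmx_adjmx_decay Vdecay.
have X_decay := normc_mulmx_adjmx_row_decay A_ge0 Hm_ge0 VV_decay Ebound.
have XE : V *m adjmx (E *m V) = V *m adjmx V *m adjmx E by rewrite adjmxM mulmxA.
rewrite /gram_inv /= XE; set Y := _ *m _ *m adjmx _.
rewrite (_ : (_ - Y) k l = (V *m adjmx V) k l - Y k l); last by rewrite !mxE.
apply: le_trans (normcB _ _) _; rewrite mulrDl lerD //.
have W_le1 := normc_invmx_gram_1D_le1 (E *m V).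
apply: le_trans (normc_sandwich_decay X_decay W_le1 k l) _.
by rewrite ler_wpM2l ?sqr_ge0 // ler_iXn2l //; lia.
Qed.

End Decay.

Lemma coef_Kpoly (C : nzRingType) n0 (a : int -> C) j : (j <= n0.*2)%N ->
  (Kpoly n0 a)`_j = a (j%:Z - n0%:Z).
Proof.
rewrite -ltnS => lt_j; rewrite /Kpoly coef_sum (bigD1 (Ordinal lt_j)) //=.
rewrite coefZ coefXn eqxx mulr1 big1 ?addr0 // => i ne_ij.
rewrite coefZ coefXn (_ : (j == i) = false) ?mulr0 //.
by apply: contraNF ne_ij => /eqP ji; apply/eqP/val_inj.
Qed.

Lemma toeplitz_band_gram (R : rcfType) n0 N (a : int -> R[i]) (h : {poly R[i]}) (c : R[i]) :
  (size h <= n0.+1)%N -> Kpoly n0 a = h * (c *: map_poly conjc (reciprocal n0 h)) ->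
  toeplitz_band n0 N a = c *: (adjmx (conv_mx n0 N h) *m conv_mx n0 N h).
Proof.
move=> size_h Kh; have h_hi i : (n0 < i)%N -> h`_i = 0.
  by move=> lt_i; rewrite nth_default // (leq_trans size_h).
apply/matrixP => k l; rewrite !mxE; under eq_bigr do rewrite !mxE.
set G := fun r => (if (k <= r)%N then h`_(r - k) else 0)^* * (if (l <= r)%N then h`_(r - l) else 0).
rewrite -/(\sum_(r < n0 + N.+1) G r).
have := ltn_ord k; have := ltn_ord l; case: ifP => [band_kl lt_l lt_k | off_band _ _].
  (* On the band, a_(k - l) is the coefficient of X^(k + n0 - l) in h * (c h~). *)
  have -> : (k%:Z - l%:Z = (k + n0 - l)%N%:Z - n0%:Z)%R by lia.
  rewrite -coef_Kpoly; last lia.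
  rewrite Kh -scalerAr coefZ coefM (@big_ord_window _ G _ l (k + n0 - l)); last 2 first.
  - lia.
  - move=> r /orP[lt_rl | lt_r]; first by rewrite /G (leqNgt l r) lt_rl mulr0.
    by rewrite /G; case: ifP; rewrite ?(h_hi (r - k)%N) ?rmorph0 ?mul0r //; lia.
  congr (_ * _); apply: eq_bigr => i _; rewrite /G coef_map coef_poly /= leq_addr addKn mulrC.
  have := ltn_ord i; case: (leqP k (l + i)) => [le_k lt_i | lt_li _].
    by rewrite ifT; [congr (_^* * _); congr (h`_ _) | ]; lia.
  by rewrite ifF ?rmorph0 ?mulr0 //; lia.
rewrite big1 ?mulr0 // => r _; rewrite /G.
case: (leqP k r) => [le_kr | _]; last by rewrite rmorph0 mul0r.
case: (leqP l r) => [le_lr | _]; last by rewrite mulr0.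
case: (leqP (r - k) n0) => [le_rk | lt_rk]; last by rewrite h_hi ?rmorph0 ?mul0r.
case: (leqP (r - l) n0) => [le_rl | lt_rl]; last by rewrite (h_hi (r - l)%N) ?mulr0.
by move/negbT: off_band; lia.
Qed.

Section BandToeplitzInverse.
Variables (R : rcfType) (n0 : nat) (a : int -> R[i]) (alpha : seq R[i]).
Hypothesis size_alpha : size alpha = n0.
Hypothesis a_herm : forall j : int, (`|j| <= n0)%N -> a j = (a (- j))^*.
Hypothesis Kpoly_alpha : Kpoly n0 a =
  \prod_(z <- alpha) ('X - z%:P) * \prod_(z <- alpha) ('X - ((z^*)^-1)%:P).

Let h := \prod_(z <- alpha) ('X - z%:P).
Let c := \prod_(z <- alpha) (- (z^*)^-1).
Let H N := conv_mx n0 N h.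
Let V N := upper_toeplitz N (\prod_(z <- alpha) geom_poly z N).

Lemma size_h : size h = n0.+1.
Proof. by rewrite size_prod_XsubC size_alpha. Qed.

Lemma a_n0_eq1 : a n0 = 1.
Proof.
have monic_h : h \is monic := monic_prod_XsubC _ _ _.
have monic_g : \prod_(z <- alpha) ('X - ((z^*)^-1)%:P) \is monic := monic_prod_XsubC _ _ _.
have size_K : size (Kpoly n0 a) = (n0.*2).+1.
  by rewrite Kpoly_alpha size_Mmonic ?monic_neq0 // !size_prod_XsubC size_alpha; lia.
have : lead_coef (Kpoly n0 a) = 1 by apply/monicP; rewrite Kpoly_alpha monicMl.
by rewrite lead_coefE size_K coef_Kpoly // -addnn PoszD addrK.
Qed.

Lemma alpha_neq0 : 0 \notin alpha.
Proof.
apply/negP => alpha0.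
have : (Kpoly n0 a)`_0 = 1 by rewrite coef_Kpoly // sub0r a_herm ?abszN // opprK a_n0_eq1 conjc1.
rewrite Kpoly_alpha coef0M -horner_coef0 -/h (rootP _) ?mul0r; last first.
  by rewrite root_prod_XsubC.
by move/eqP; rewrite eq_sym oner_eq0.
Qed.

Lemma c_neq0 : c != 0.
Proof.
rewrite prodf_seq_neq0; apply/allP => z z_alpha /=.
by rewrite oppr_eq0 invr_eq0 conjc_eq0; apply: contraNneq alpha_neq0 => <-.
Qed.

Lemma Kpoly_reciprocal : Kpoly n0 a = h * (c *: map_poly conjc (reciprocal n0 h)).
Proof.
rewrite Kpoly_alpha -size_alpha reciprocal_prod_XsubC rmorph_prod -scaler_prod.
congr (_ * _); rewrite big_seq [RHS]big_seq; apply: eq_bigr => z z_alpha.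
have zJ_neq0 : z^* != 0 by rewrite conjc_eq0; apply: contraNneq alpha_neq0 => <-.
rewrite rmorphB rmorph1 /= map_polyZ map_polyX scalerBr scalerA mulNr mulVf // scaleN1r.
by rewrite opprK addrC alg_polyC polyCN.
Qed.

Lemma toeplitz_band_mul_gram_inv N :
  toeplitz_band n0 N a *m (c^-1 *: gram_inv (usubmx (H N)) (V N)) = 1%:M.
Proof.
have U_E : dsubmx (H N) = upper_toeplitz N (\prod_(z <- alpha) (1 - z *: 'X)).
  by rewrite dsubmx_conv_mx ?size_h // -size_alpha reciprocal_prod_XsubC.
have UV := upper_toeplitz_prod_geom N alpha.
have VU : V N *m dsubmx (H N) = 1%:M by rewrite U_E -upper_toeplitzM mulrC upper_toeplitzM.
rewrite (toeplitz_band_gram _ _ Kpoly_reciprocal) ?size_h // -/(H N).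
rewrite -scalemxAl -scalemxAr scalerA mulfV ?c_neq0 // scale1r.
by rewrite -{1 2}(vsubmxK (H N)) gram_invP // U_E.
Qed.

Lemma toeplitz_band_unit N : toeplitz_band n0 N a \in unitmx.
Proof. exact: (mulmx1_unit (toeplitz_band_mul_gram_inv N)).1. Qed.

Lemma invmx_toeplitz_band N :
  invmx (toeplitz_band n0 N a) = c^-1 *: gram_inv (usubmx (H N)) (V N).
Proof.
by rewrite -[RHS](mulKmx (toeplitz_band_unit N)) toeplitz_band_mul_gram_inv mulmx1.
Qed.

Lemma invmx_toeplitz_band_decay rho : 0 < rho -> rho < 1 ->
  (forall z, z \in alpha -> normc z < rho) ->
  exists C, forall N (k l : 'I_N.+1),
    normc (invmx (toeplitz_band n0 N a) k l) <= C * rho ^+ `|(k%:Z - l%:Z)%R|%N.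
Proof.
move=> rho_gt0 rho_lt1 alpha_rho.
have [Mv _ coef_le] := normc_coef_prod_geom rho_gt0 alpha_rho.
set Hm := \sum_(i < n0.+1) normc h`_i.
have Hm_ge0 : 0 <= Hm by rewrite sumr_ge0 // => i _; apply: normc_ge0.
have [C0 decay] := gram_inv_decay rho_gt0 rho_lt1 n0 Mv Hm_ge0.
exists (normc c^-1 * C0) => N k l.
rewrite invmx_toeplitz_band mxE normcM -mulrA ler_wpM2l ?normc_ge0 //.
apply: decay => [t s | p s]; rewrite !mxE.
  by case: ifP => _; rewrite ?normc0 ?coef_le.
have lt_p := ltn_ord p.
case: ifP => [le_sp | _]; last by rewrite normc0; case: ifP.
have le_sp' : (s <= p)%N := le_sp.
have lt_hp : (p - s < n0.+1)%N by lia.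
rewrite ifT; last lia.
by rewrite /Hm (bigD1 (Ordinal lt_hp)) //= lerDl sumr_ge0 // => i _; apply: normc_ge0.
Qed.

End BandToeplitzInverse.

Theorem mainTheorem2 (R : realType) (n0 : nat) (a : int -> R[i])
  (hn0 : (1 <= n0)%N)
  (hherm : forall j : int, (`|j| <= n0)%N -> a j = (a (- j))^*)
  (hK : exists alpha : seq R[i],
      [/\ size alpha = n0,
          all (fun z => `|z| < 1) alpha &
          Kpoly n0 a = \prod_(z <- alpha) ('X - z%:P)
                       * \prod_(z <- alpha) ('X - ((z^*)^-1)%:P)]) :
  (forall N : nat, (1 <= N)%N -> toeplitz_band n0 N a \in unitmx) /\
  (forall (x : R), 0 < x < 1 ->
   forall (b rho : R), 0 < b < 1 ->
     (forall z : R[i], root (Kpoly n0 a) z -> `|z| < 1 -> `|z| < rho%:C) ->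
     rho < 1 ->
   forall eps : R, 0 < eps ->
   exists N1 : nat, forall N : nat, (N1 <= N)%N ->
     forall k l : 'I_N.+1,
       (`|(k%:Z - l%:Z)%R|%N)%:R = N%:R * x ->
       `|invmx (toeplitz_band n0 N a) k l|
         <= (eps * powR rho (b * (`|(k%:Z - l%:Z)%R|%N)%:R))%:C).
Proof.
case: hK => alpha [size_alpha /allP alpha_lt1 Kpoly_alpha].
split=> [N _ | x /andP[x_gt0 _] b rho /andP[_ b_lt1] roots_rho rho_lt1 eps eps_gt0].
  exact: toeplitz_band_unit size_alpha hherm Kpoly_alpha N.
have alpha_rho z : z \in alpha -> normc z < rho.
  move=> z_alpha; rewrite -ltcR -normr_normc roots_rho ?alpha_lt1 //.
  by rewrite Kpoly_alpha rootM root_prod_XsubC z_alpha.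
have rho_gt0 : 0 < rho.
  have z_alpha : nth 0 alpha 0 \in alpha by rewrite mem_nth // size_alpha.
  exact: le_lt_trans (normc_ge0 _) (alpha_rho _ z_alpha).
have [C decay] :=
  invmx_toeplitz_band_decay size_alpha hherm Kpoly_alpha rho_gt0 rho_lt1 alpha_rho.
have rho_lt_tau : 0 < rho < rho `^ b by rewrite rho_gt0 ltr1_powR ?rho_gt0.
have [N1 dominated] := exprn_dominated C rho_lt_tau eps_gt0 x_gt0.
exists N1 => N le_N1N k l dist_kl.
rewrite powRrM powR_mulrn ?powR_ge0 // normr_normc lecR.
exact: le_trans (decay N k l) (dominated N _ le_N1N dist_kl).
Qed.
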